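(* Let $G=(V,E,\mathbf{X})$ be a finite graph with node features $\mathbf{X}[v]\in\mathbb{R}^t$ for $v\in V$, and let $G_1=(V_1,E_1,\mathbf{X}_1),\dots,G_q=(V_q,E_q,\mathbf{X}_q)$ be the subgraphs produced from $G$ by a subgraph generation policy, where $V_j\subseteq V$ and $\mathbf{X}_j[v]\in\mathbb{R}^t$. Fix $L\ge 1$ message-passing layers $\mathtt{MPNN}_1,\dots,\mathtt{MPNN}_L$ (with aggregate functions $AGG_i$ and combine functions $COM_i$) and a pooling function $\mathtt{pool}$. Conventional subgraph GNN: for each $j$, set $\mathbf{H}_j^{(0)}=\mathbf{X}_j$ and for $1\le i\le L$, $v\in V_j$, $\mathbf{H}_j^{(i)}[v]=COM_i\big(AGG_i(\{\!\{\mathbf{H}_j^{(i-1)}[u]:u\in\mathcal{N}_j(v)\}\!\}),\mathbf{H}_j^{(i-1)}[v]\big)$; the output is $Y=\mathtt{pool}(\mathbf{H}_1^{(L)},\dots,\mathbf{H}_q^{(L)})$. ENFA: set $\mathbf{H}_o^{(0)}=\mathbf{X}$ and $\widehat{\mathbf{H}}_j^{(0)}=\mathbf{X}_j$. For $1\le i\le L$: compute $\mathbf{H}_o^{(i)}$ by applying $\mathtt{MPNN}_i$ to $\mathbf{H}_o^{(i-1)}$ on the original graph $G$ (neighborhoods $\mathcal{N}(v)$); for each $j$, compute $\widehat{\mathbf{H}}_j^{(i)}$ by applying $\mathtt{MPNN}_i$ to $\widehat{\mathbf{H}}_j^{(i-1)}$ on the $(L+1)$-hop ego net $G_j^{L+1}$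 of $\mathtt{pvt}(G_j)$ in $G_j$ (nodes of $V_j$ not in this ego net have no neighbors); then for every $v\in V_j$ with $\mathtt{phop}_j(v)>i$ overwrite $\widehat{\mathbf{H}}_j^{(i)}[v]:=\mathbf{H}_o^{(i)}[v]$. The ENFA output is $\widehat{Y}=\mathtt{pool}(\widehat{\mathbf{H}}_1^{(L)},\dots,\widehat{\mathbf{H}}_q^{(L)})$. Then for every $j\in\{1,\dots,q\}$ and every node $v$ of the ego net $G_j^{L+1}$, $\widehat{\mathbf{H}}_j^{(L)}[v]=\mathbf{H}_j^{(L)}[v]$; consequently $\widehat{Y}=Y$.
   Context: $\mathcal{N}(v)$ denotes the neighbors of $v$ in $G$ and $\mathcal{N}_j(v)$ the neighbors of $v$ in $G_j$; $\{\!\{\cdot\}\!\}$ denotes a multiset. The pivot nodes of $G_j$ are $\mathtt{pvt}(G_j)=\{v\in V_j:\mathcal{N}(v)\ne\mathcal{N}_j(v)\text{ or }\mathbf{X}[v]\ne\mathbf{X}_j[v]\}$, i.e. the nodes whose neighborhood or features differ between $G_j$ and $G$. The pivot hop of $v\in V_j$ is $\mathtt{phop}_j(v)=\min\{\mathtt{hop}^j(v,w):w\in\mathtt{pvt}(G_j)\}$, where $\mathtt{hop}^j$ is the shortest-path distance in $G_j$ (the minimum over an empty set is $+\infty$). The $h$-hop ego net $G_j^{h}$ of $\mathtt{pvt}(G_j)$ in $G_j$ is the subgraph of $G_j$ induced on the nodes $v\in V_j$ with $\mathtt{phop}_j(v)\le h$, with features inherited from $\mathbf{X}_j$. Examples of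 policies: node-marking (each subgraph is $G$ with an extra feature column marking one root node, the original graph being taken with that column equal to zero), node-deleting (delete one node and its incident edges), edge-deleting (delete one edge). The same layers $\mathtt{MPNN}_i$ (same parameters) are used on $G$ and on all subgraphs. *)

From HB Require Import structures.
From mathcomp Require Import all_boot all_order all_algebra.
From mathcomp Require Import finmap multiset.
From mathcomp Require Import reals.

Set Implicit Arguments.
Unset Strict Implicit.
Unset Printing Implicit Defensive.

Import Order.TTheory GRing.Theory Num.Theory.
Local Open Scope ring_scope.

(* Extended naturals: [None] stands for +infinity. *)
Definition omin (a b : option nat) : option nat :=
  match a, b with
  | None, _ => b
  | _, None => a
  | Some x, Some y => Some (minn x y)
  end.

Definition ole (a : option nat) (h : nat) : bool :=
  if a is Some x then (x <= h)%N else false.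

Section Graphs.
Variable V : finType.

Fixpoint within (E : rel V) (k : nat) (v w : V) : bool :=
  if k is k'.+1 then within E k' v w || [exists u, E v u && within E k' u w]
  else v == w.

(* shortest-path distance (hop count) along E; None = +oo (no path).
   In a finite graph a shortest walk has length < #|V|. *)
Definition hop (E : rel V) (v w : V) : option nat :=
  let k := find (fun k => within E k v w) (iota 0 #|V|) in
  if (k < #|V|)%N then Some k else None.

Definition nbhd (E : rel V) (v : V) : {set V} := [set u | E v u].

End Graphs.

Section GNN.
Variables (R : realType) (V : finType).
(* original graph G = (V, E, X); feature dimensions d i at layer i (t = d 0) *)
Variable (d a : nat -> nat).
Variables (E : rel V) (X : V -> 'rV[R]_(d 0%N)).
Variables (q : nat) (Vs : 'I_q -> {set V}) (Es : 'I_q -> rel V)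
          (Xs : 'I_q -> V -> 'rV[R]_(d 0%N)).
(* number of layers; layer i.+1 (i < L) has aggregate AGG i and combine COM i *)
Variable (L : nat).
Variable AGG : forall i, multiset 'rV[R]_(d i) -> 'rV[R]_(a i).
Variable COM : forall i, 'rV[R]_(a i) -> 'rV[R]_(d i) -> 'rV[R]_(d i.+1).

Definition mpnn (i : nat) (N : V -> {set V}) (H : V -> 'rV[R]_(d i)) :
    V -> 'rV[R]_(d i.+1) :=
  fun v => COM (AGG (seq_mset [seq H u | u <- enum (N v)])) (H v).

Definition pvt (j : 'I_q) : {set V} :=
  [set v in Vs j | (nbhd E v != nbhd (Es j) v) || (X v != Xs j v)].

Definition phop (j : 'I_q) (v : V) : option nat :=
  \big[omin/None]_(w in pvt j) hop (Es j) v w.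

Definition egonet (j : 'I_q) (h : nat) : {set V} :=
  [set v in Vs j | ole (phop j v) h].

(* Representations of nodes of G_j are stored as functions on V, with the
   value 0 on nodes outside V_j (which carry no representation). *)

Fixpoint Hsub (j : 'I_q) (i : nat) : V -> 'rV[R]_(d i) :=
  match i with
  | 0 => fun v => if v \in Vs j then Xs j v else 0
  | i'.+1 => fun v => if v \in Vs j then mpnn (nbhd (Es j)) (Hsub j i') v else 0
  end.

Fixpoint Horig (i : nat) : V -> 'rV[R]_(d i) :=
  match i with
  | 0 => X
  | i'.+1 => mpnn (nbhd E) (Horig i')
  end.

Definition ego_nbhd (j : 'I_q) (v : V) : {set V} :=
  if v \in egonet j L.+1 then [set u in egonet j L.+1 | Es j v u] else set0.

Fixpoint Henfa (j : 'I_q) (i : nat) : V -> 'rV[R]_(d i) :=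
  match i with
  | 0 => fun v => if v \in Vs j then Xs j v else 0
  | i'.+1 => fun v =>
      if v \in Vs j then
        (if ~~ ole (phop j v) i'.+1 then Horig i'.+1 v
         else mpnn (ego_nbhd j) (Henfa j i') v)
      else 0
  end.

End GNN.

From HB Require Import structures.
From mathcomp Require Import all_boot all_order all_algebra.
From mathcomp Require Import finmap multiset.
From mathcomp Require Import reals.
Local Open Scope ring_scope.

Set Implicit Arguments.
Unset Strict Implicit.
Unset Printing Implicit Defensive.

(* If phop_j(v) > i, no
   pivot lies within i hops of v, so v has the same features and neighbours in
   G_j as in G, and inductively the same holds for its neighbours up to depth
   i - 1; hence H_j^(i)[v] = H_o^(i)[v], which is the value ENFA copies in.
   If phop_j(v) <= i <= L, every G_j-neighbour of v is within L + 1 hops of a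
   pivot, so the neighbourhood of v in the ego net G_j^(L+1) is its full
   neighbourhood in G_j and the two layers coincide. *)

Section Distances.
Variables (V : finType) (E : rel V).

Definition reach_set (w : V) (k : nat) : {set V} := [set v | within E k v w].

Lemma reach_setS w k :
  reach_set w k.+1 =
  [set v | (v \in reach_set w k) || [exists u, E v u && (u \in reach_set w k)]].
Proof.
apply/setP => v; rewrite !inE /=; congr (_ || _).
by apply/eq_existsb => u; rewrite inE.
Qed.

Lemma reach_set_subS w k : reach_set w k \subset reach_set w k.+1.
Proof. by apply/subsetP => v; rewrite !inE /= => ->. Qed.

Lemma reach_set_stable w n m :
  reach_set w n = reach_set w n.+1 -> (n <= m)%N -> reach_set w m = reach_set w n.
Proof.
move=> fix_n; elim: m => [|m IHm]; first by rewrite leqn0 => /eqP ->.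
rewrite leq_eqVlt => /orP[/eqP <- // | lt_nm].
by rewrite reach_setS IHm // -reach_setS.
Qed.

Lemma reach_set_card_grow w n :
  (forall m, (m < n)%N -> reach_set w m != reach_set w m.+1) ->
  (n < #|reach_set w n|)%N.
Proof.
elim: n => [|n IHn] grow; first by apply/card_gt0P; exists w; rewrite inE /=.
apply: leq_ltn_trans (IHn (fun m lt_mn => grow m (ltnW lt_mn))) _.
by apply: proper_card; rewrite properEneq grow // reach_set_subS.
Qed.

(* The reach sets increase with k, so two consecutive ones among the first
   #|V| + 1 coincide, and from then on they are constant. *)
Lemma within_shorten k v w :
  within E k v w -> exists m, [/\ (m < #|V|)%N, (m <= k)%N & within E m v w].
Proof.
move=> vw_k; have [lt_kV | le_Vk] := ltnP k #|V|; first by exists k.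
have [m lt_mV fix_m] : exists2 m, (m < #|V|)%N & reach_set w m = reach_set w m.+1.
  have [/hasP[m] | /hasPn grow] :=
    boolP (has (fun m => reach_set w m == reach_set w m.+1) (iota 0 #|V|)).
    by rewrite mem_iota add0n => lt_mV /eqP; exists m.
  have : (#|V| < #|reach_set w #|V| |)%N.
    by apply: reach_set_card_grow => m lt_mV; apply: grow; rewrite mem_iota.
  by rewrite ltnNge max_card.
exists m; split => //; first exact: leq_trans (ltnW lt_mV) le_Vk.
have : v \in reach_set w k by rewrite inE.
by rewrite (reach_set_stable fix_m (leq_trans (ltnW lt_mV) le_Vk)) inE.
Qed.

Lemma hop_le_within k v w :
  within E k v w -> exists2 k', hop E v w = Some k' & (k' <= k)%N.
Proof.
case/within_shorten => m [lt_mV le_mk vw_m].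
pose k' := find (fun k => within E k v w) (iota 0 #|V|).
have le_k'm : (k' <= m)%N.
  rewrite leqNgt; apply/negP => /(before_find 0).
  by rewrite nth_iota // add0n vw_m.
by exists k'; rewrite /hop ?(leq_ltn_trans le_k'm lt_mV) // (leq_trans le_k'm).
Qed.

Lemma within_hop k v w : hop E v w = Some k -> within E k v w.
Proof.
rewrite /hop; case: ifP => // lt_kV [<-].
have := nth_find 0 (_ : has (fun k => within E k v w) (iota 0 #|V|)).
by rewrite nth_iota // add0n; apply; rewrite has_find size_iota.
Qed.

Lemma hop_self v : hop E v v = Some 0%N.
Proof.
have [k' hop_vv] := @hop_le_within 0 v v (eqxx v).
by rewrite leqn0 => /eqP k'0; rewrite hop_vv k'0.
Qed.

Lemma hop_adj v u w k :
  E v u -> hop E u w = Some k -> exists2 k', hop E v w = Some k' & (k' <= k.+1)%N.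
Proof.
move=> Evu /within_hop uw_k; apply: hop_le_within => /=.
by apply/orP; right; apply/existsP; exists u; rewrite Evu.
Qed.

End Distances.

Lemma ole_trans a k m : ole a k -> (k <= m)%N -> ole a m.
Proof. by case: a => //= x; apply: leq_trans. Qed.

Lemma ole_omin a b k : ole (omin a b) k = ole a k || ole b k.
Proof. by case: a b => [x|] [y|] //=; rewrite ?geq_min ?orbF. Qed.

Lemma ole_big_omin (I : finType) (P : pred I) (F : I -> option nat) k :
  ole (\big[omin/None]_(i | P i) F i) k = [exists i, P i && ole (F i) k].
Proof.
have -> : [exists i, P i && ole (F i) k] =
          has (fun i => P i && ole (F i) k) (index_enum I).
  apply/existsP/hasP => [[i Pi] | [i _ Pi]]; last by exists i.
  by exists i; rewrite ?mem_index_enum.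
elim: (index_enum I) => [|i s IHs]; first by rewrite big_nil.
by rewrite big_cons /=; case: (P i); rewrite ?ole_omin IHs.
Qed.

Section SubgraphGNN.
Variables (R : realType) (V : finType) (d a : nat -> nat).
Variables (E : rel V) (X : V -> 'rV[R]_(d 0%N)).
Variables (q : nat) (Vs : 'I_q -> {set V}) (Es : 'I_q -> rel V)
          (Xs : 'I_q -> V -> 'rV[R]_(d 0%N)).
Variable L : nat.
Variable AGG : forall i, multiset 'rV[R]_(d i) -> 'rV[R]_(a i).
Variable COM : forall i, 'rV[R]_(a i) -> 'rV[R]_(d i) -> 'rV[R]_(d i.+1).
Variable j : 'I_q.
Hypothesis Es_sym : symmetric (Es j).
Hypothesis Es_in : forall u w, Es j u w -> (u \in Vs j) && (w \in Vs j).

Local Notation pvt_j := (pvt E X Vs Es Xs j).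
Local Notation phop_j := (phop E X Vs Es Xs j).
Local Notation Hsub_j := (Hsub Vs Es Xs AGG COM j).
Local Notation Horig := (Horig E X AGG COM).
Local Notation Henfa_j := (Henfa E X Vs Es Xs L AGG COM j).

Lemma ole_phop v k :
  ole (phop_j v) k = [exists w, (w \in pvt_j) && ole (hop (Es j) v w) k].
Proof. exact: ole_big_omin. Qed.

Lemma phop_pvt v k : v \in pvt_j -> ole (phop_j v) k.
Proof.
by move=> pvt_v; rewrite ole_phop; apply/existsP; exists v; rewrite pvt_v hop_self.
Qed.

Lemma phop_adj v u k : Es j v u -> ole (phop_j u) k -> ole (phop_j v) k.+1.
Proof.
move=> Evu; rewrite !ole_phop => /existsP[w /andP[pvt_w]].
case uw: (hop (Es j) u w) => [k'|] //= le_k'k.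
have [k'' vw le_k''] := hop_adj Evu uw.
apply/existsP; exists w; rewrite pvt_w vw /=.
by apply: leq_trans le_k'' _; rewrite ltnS.
Qed.

Lemma phop_far_agree v i :
  v \in Vs j -> ~~ ole (phop_j v) i -> nbhd E v = nbhd (Es j) v /\ X v = Xs j v.
Proof.
move=> Vv far_v; have : v \notin pvt_j by apply: contra far_v; apply: phop_pvt.
by rewrite inE Vv negb_or !negbK => /andP[/eqP -> /eqP ->].
Qed.

Lemma Hsub_far i v :
  v \in Vs j -> ~~ ole (phop_j v) i -> Hsub_j i v = Horig i v.
Proof.
elim: i v => [|i IHi] v Vv far_v.
  by have [_ Xv] := phop_far_agree Vv far_v; rewrite /= Vv Xv.
have [Nv _] := phop_far_agree Vv far_v.
rewrite /= Vv /mpnn Nv; congr (COM (AGG (seq_mset _)) _).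
  apply/eq_in_map => u; rewrite mem_enum inE => Evu.
  apply: IHi; first by case/andP: (Es_in Evu).
  by apply: contra far_v; apply: phop_adj.
by apply: IHi => //; apply: contra far_v => /ole_trans; apply.
Qed.

Lemma ego_nbhd_near v :
  v \in Vs j -> ole (phop_j v) L -> ego_nbhd E X Vs Es Xs L j v = nbhd (Es j) v.
Proof.
move=> Vv near_v; rewrite /ego_nbhd inE Vv (ole_trans near_v) //=.
apply/setP => u; rewrite !inE; case Evu: (Es j v u); rewrite ?andbF //.
have Euv : Es j u v by rewrite Es_sym.
by case/andP: (Es_in Evu) => _ ->; rewrite (phop_adj Euv near_v).
Qed.

Lemma Henfa_Hsub i : (i <= L)%N -> Henfa_j i =1 Hsub_j i.
Proof.
elim: i => [|i IHi] lt_iL v //=; case Vv: (v \in Vs j) => //.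
have [near_v | far_v] := boolP (ole (phop_j v) i.+1); last first.
  by have := Hsub_far Vv far_v; rewrite /= Vv => <-.
rewrite /mpnn ego_nbhd_near ?(ole_trans near_v) //.
have le_iL := ltnW lt_iL.
by congr (COM (AGG (seq_mset _)) _); [apply/eq_map => u|]; apply: IHi.
Qed.

End SubgraphGNN.

Theorem theorem1 (R : realType) (V : finType) (d a : nat -> nat)
  (E : rel V) (X : V -> 'rV[R]_(d 0%N))
  (q : nat) (Vs : 'I_q -> {set V}) (Es : 'I_q -> rel V)
  (Xs : 'I_q -> V -> 'rV[R]_(d 0%N))
  (L : nat)
  (AGG : forall i, multiset 'rV[R]_(d i) -> 'rV[R]_(a i))
  (COM : forall i, 'rV[R]_(a i) -> 'rV[R]_(d i) -> 'rV[R]_(d i.+1))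
  (O : Type) (pool : ('I_q -> V -> 'rV[R]_(d L)) -> O) :
  (* G is a simple (undirected, loopless) graph *)
  symmetric E -> irreflexive E ->
  (* each G_j is a simple graph on the node set Vs j *)
  (forall j, symmetric (Es j)) -> (forall j, irreflexive (Es j)) ->
  (forall j u w, Es j u w -> (u \in Vs j) && (w \in Vs j)) ->
  (1 <= L)%N ->
  (forall (j : 'I_q) (v : V), v \in egonet E X Vs Es Xs j L.+1 ->
      Henfa E X Vs Es Xs L AGG COM j L v = Hsub Vs Es Xs AGG COM j L v)
  /\ pool (fun j => Henfa E X Vs Es Xs L AGG COM j L)
     = pool (fun j => Hsub Vs Es Xs AGG COM j L).
Proof.
move=> _ _ Es_sym _ Es_in _.
have Henfa_eq j : Henfa E X Vs Es Xs L AGG COM j L = Hsub Vs Es Xs AGG COM j L.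
  apply: boolp.funext => v.
  exact: (Henfa_Hsub E X Xs AGG COM (Es_sym j) (Es_in j) (leqnn L)).
split=> [j v _ | ]; first by rewrite Henfa_eq.
by congr pool; apply: boolp.funext => j; rewrite Henfa_eq.
Qed.
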